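(* If expressions $e_1$ and $e_2$ are compatible, then for every $\sigma\in\Sigma$ and all $m_1,m_2\in\mathcal W(\Sigma)$, the sum $[\![e_1]\!](\sigma)\cdot m_1+[\![e_2]\!](\sigma)\cdot m_2$ is defined (and is an element of $\mathcal W(\Sigma)$).
   Context: $\mathcal A=\langle U,+,\cdot,\mathbf 0,\mathbf 1\rangle$ is a partial semiring ($+$ commutative, associative, possibly partial, unit $\mathbf 0$; $\cdot$ total, associative, unit $\mathbf 1$; two-sided distributivity; $\mathbf 0$ annihilates), naturally ordered ($u\le v$ iff $\exists w.\,u+w=v$ is a partial order), Scott continuous ($+$ and $\cdot$ preserve suprema of directed sets in each argument), with a top element. Infinite sums are suprema of finite partial sums. $\mathcal W(\Sigma)$: maps $m:\Sigma\to U$ with countable support $\mathrm{supp}(m)=\{\sigma:m(\sigma)\neq\mathbf 0\}$ and defined mass $|m|=\sum_{\sigma\in\mathrm{supp}(m)}m(\sigma)$; $u\cdot m$ and $m_1+m_2$ are pointwise. An expression $e$ is either a test $b$ (a Boolean combination of $\mathsf{true},\mathsf{false}$ and primitive tests $t\subseteq\Sigma$, evaluating to $[\![b]\!](\sigma)\in\{\mathbf 0,\mathbf 1\}$ with $[\![t]\!](\sigma)=\mathbf 1$ iff $\sigma\in t$) or a weight $u\in U$ with $[\![u]\!](\sigma)=u$. Expressions $e_1,e_2$ are compatible if $[\![e_1]\!](\sigma)+[\![e_2]\!](\sigma)$ is defined for every $\sigma\in\Sigma$. *)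

From Stdlib Require Import List.
Import ListNotations.
Set Implicit Arguments.

Definition obind {A B : Type} (o : option A) (f : A -> option B) : option B :=
  match o with Some a => f a | None => None end.

Record psemiring (U : Type) := PSemiring {
  padd : U -> U -> option U;
  pmul : U -> U -> U;
  pzero : U;
  pone : U;
  padd_comm : forall a b, padd a b = padd b a;
  (* (a+b)+c defined iff a+(b+c) defined, and then they are equal *)
  padd_assoc : forall a b c,
    obind (padd a b) (fun x => padd x c) = obind (padd b c) (fun y => padd a y);
  padd_0 : forall a, padd pzero a = Some a;
  pmul_assoc : forall a b c, pmul a (pmul b c) = pmul (pmul a b) c;
  pmul_1l : forall a, pmul pone a = a;
  pmul_1r : forall a, pmul a pone = a;
  pmul_addr : forall u a b c, padd a b = Some c ->
    padd (pmul u a) (pmul u b) = Some (pmul u c);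
  pmul_addl : forall u a b c, padd a b = Some c ->
    padd (pmul a u) (pmul b u) = Some (pmul c u);
  pmul_0l : forall a, pmul pzero a = pzero;
  pmul_0r : forall a, pmul a pzero = pzero
}.

Section Order.
Variables (U : Type) (A : psemiring U).

Definition ple (u v : U) : Prop := exists w, padd A u w = Some v.

Definition is_sup (P : U -> Prop) (s : U) : Prop :=
  (forall x, P x -> ple x s) /\ (forall y, (forall x, P x -> ple x y) -> ple s y).

Definition directed (D : U -> Prop) : Prop :=
  (exists x, D x) /\
  (forall x y, D x -> D y -> exists z, D z /\ ple x z /\ ple y z).

Definition naturally_ordered : Prop :=
  (* reflexivity and transitivity of ple follow from the axioms;
     we require it to be a partial order *)
  (forall u, ple u u) /\
  (forall u v w, ple u v -> ple v w -> ple u w) /\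
  (forall u v, ple u v -> ple v u -> u = v).

Definition scott_continuous : Prop :=
  (* + preserves directed suprema (in each argument; + is commutative) *)
  (forall (D : U -> Prop) s u v, directed D -> is_sup D s ->
     padd A u s = Some v ->
     is_sup (fun w => exists x, D x /\ padd A u x = Some w) v) /\
  (forall (D : U -> Prop) s u, directed D -> is_sup D s ->
     is_sup (fun w => exists x, D x /\ w = pmul A u x) (pmul A u s)) /\
  (forall (D : U -> Prop) s u, directed D -> is_sup D s ->
     is_sup (fun w => exists x, D x /\ w = pmul A x u) (pmul A s u)).

Definition has_top : Prop := exists t, forall u, ple u t.

Fixpoint fsum (l : list U) : option U :=
  match l with
  | [] => Some (pzero A)
  | x :: l' => obind (fsum l') (fun s => padd A x s)
  end.

Section W.
Variable Sig : Type.

Definition supp (m : Sig -> U) (s : Sig) : Prop := m s <> pzero A.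

Definition countable_supp (m : Sig -> U) : Prop :=
  exists g : Sig -> nat, forall x y, supp m x -> supp m y -> g x = g y -> x = y.

Definition partial_sums (m : Sig -> U) (v : U) : Prop :=
  exists l : list Sig, NoDup l /\ (forall x, In x l -> supp m x) /\
                       fsum (map m l) = Some v.

(** mass is defined: every finite partial sum is defined and they have a
    supremum (the infinite sum) *)
Definition mass_defined (m : Sig -> U) : Prop :=
  (forall l : list Sig, NoDup l -> (forall x, In x l -> supp m x) ->
     exists v, fsum (map m l) = Some v) /\
  exists M, is_sup (partial_sums m) M.

Definition inW (m : Sig -> U) : Prop := countable_supp m /\ mass_defined m.

Inductive test : Type :=
  | TTrue | TFalse
  | TPrim (t : Sig -> bool)   (* primitive test t ⊆ Σ, by its indicator *)
  | TNot (b : test) | TAnd (b1 b2 : test) | TOr (b1 b2 : test).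

Fixpoint test_eval (b : test) (s : Sig) : bool :=
  match b with
  | TTrue => true | TFalse => false
  | TPrim t => t s
  | TNot b => negb (test_eval b s)
  | TAnd b1 b2 => andb (test_eval b1 s) (test_eval b2 s)
  | TOr b1 b2 => orb (test_eval b1 s) (test_eval b2 s)
  end.

Inductive expr : Type :=
  | ETest (b : test)
  | EWeight (u : U).

Definition expr_eval (e : expr) (s : Sig) : U :=
  match e with
  | ETest b => if test_eval b s then pone A else pzero A
  | EWeight u => u
  end.

Definition compatible (e1 e2 : expr) : Prop :=
  forall s, exists v, padd A (expr_eval e1 s) (expr_eval e2 s) = Some v.

End W.
End Order.

(* The pointwise combination a.m1 + b.m2 of two weightings is defined
   because a.x <= a.T and b.y <= b.T for the top element T, the sum
   a.T + b.T = (a + b).T is defined, and sums below a defined sum are defined.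
   Its support lies in the union of supp m1 and supp m2, hence is countable.  The finite partial
   sums of the combination are the combinations of the partial sums of m1 and m2
   over the same list, so a.M1 + b.M2 bounds them; it is the least bound because,
   by Scott continuity of + and ., it is the supremum over the partial sums x1 of
   m1 of the suprema over the partial sums x2 of m2 of a.x1 + b.x2. *)

From Stdlib Require Import List Classical ClassicalEpsilon Lia.
Import ListNotations.

Section PartialSemiring.
#[local] Set Implicit Arguments.
#[local] Unset Strict Implicit.
Variables (U : Type) (A : psemiring U).

Notation "x <=: y" := (ple A x y) (at level 70).

Lemma padd_reassoc_r a b c x y :
  padd A a b = Some x -> padd A x c = Some y ->
  exists z, padd A b c = Some z /\ padd A a z = Some y.
Proof.
  intros Hab Hxc. pose proof (padd_assoc A a b c) as H.
  rewrite Hab in H; simpl in H. rewrite Hxc in H.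
  destruct (padd A b c); simpl in H; [eauto | discriminate].
Qed.

Lemma padd_reassoc_l a b c z y :
  padd A b c = Some z -> padd A a z = Some y ->
  exists x, padd A a b = Some x /\ padd A x c = Some y.
Proof.
  intros Hbc Haz. pose proof (padd_assoc A a b c) as H.
  rewrite Hbc in H; simpl in H. rewrite Haz in H.
  destruct (padd A a b); simpl in H; [eauto | discriminate].
Qed.

Lemma padd_interchange a b c d p q y :
  padd A a b = Some p -> padd A c d = Some q -> padd A p q = Some y ->
  exists j k, padd A a c = Some j /\ padd A b d = Some k /\ padd A j k = Some y.
Proof.
  intros Hp Hq Hy.
  destruct (padd_reassoc_r Hp Hy) as [z [Hbq Haz]].
  destruct (padd_reassoc_l Hq Hbq) as [w [Hbc Hwd]].
  rewrite padd_comm in Hbc.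
  destruct (padd_reassoc_r Hbc Hwd) as [k [Hbd Hck]].
  destruct (padd_reassoc_l Hck Haz) as [j [Hac Hjk]].
  eauto.
Qed.

Lemma ple_refl u : u <=: u.
Proof. exists (pzero A). rewrite padd_comm. apply padd_0. Qed.

Lemma ple_trans u v w : u <=: v -> v <=: w -> u <=: w.
Proof.
  intros [x Hx] [x' Hx'].
  destruct (padd_reassoc_r Hx Hx') as [z [_ Hz]]. exists z. exact Hz.
Qed.

Lemma ple_0 u : pzero A <=: u.
Proof. exists u. apply padd_0. Qed.

Lemma ple_pmul_l a x y : x <=: y -> pmul A a x <=: pmul A a y.
Proof. intros [w Hw]. exists (pmul A a w). apply pmul_addr; assumption. Qed.

Lemma padd_ple_l u u' v y :
  u <=: u' -> padd A u' v = Some y -> exists z, padd A u v = Some z /\ z <=: y.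
Proof.
  intros [w Hw] Hy.
  destruct (padd_reassoc_r Hw Hy) as [z' [Hwv Huz]].
  rewrite padd_comm in Hwv.
  destruct (padd_reassoc_l Hwv Huz) as [x [Hx Hxw]].
  exists x. split; [assumption | exists w; assumption].
Qed.

Lemma padd_ple u u' v v' y :
  u <=: u' -> v <=: v' -> padd A u' v' = Some y ->
  exists z, padd A u v = Some z /\ z <=: y.
Proof.
  intros Hu Hv Hy.
  destruct (padd_ple_l Hu Hy) as [z1 [Hz1 Lz1]].
  rewrite padd_comm in Hz1.
  destruct (padd_ple_l Hv Hz1) as [z [Hz Lz]].
  exists z. split; [rewrite padd_comm; assumption | eapply ple_trans; eassumption].
Qed.

Lemma padd_pmul_defined a b c x y : has_top A ->
  padd A a b = Some c -> exists z, padd A (pmul A a x) (pmul A b y) = Some z.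
Proof.
  intros [T HT] Hc.
  destruct (padd_ple (ple_pmul_l a (HT x)) (ple_pmul_l b (HT y))
              (pmul_addl A T a b Hc)) as [z [Hz _]].
  eauto.
Qed.

Lemma directed_pmul_l (D : U -> Prop) a :
  directed A D -> directed A (fun w => exists x, D x /\ w = pmul A a x).
Proof.
  intros [[x0 Hx0] HD]. split.
  - exists (pmul A a x0). eauto.
  - intros x y [x' [Hx ->]] [y' [Hy ->]].
    destruct (HD x' y' Hx Hy) as [z [Hz [Lx Ly]]].
    exists (pmul A a z). split; [eauto | split; apply ple_pmul_l; assumption].
Qed.

Lemma padd_pmul_sup_le (D : U -> Prop) s u a v y :
  scott_continuous A -> directed A D -> is_sup A D s ->
  padd A u (pmul A a s) = Some v ->
  (forall x w, D x -> padd A u (pmul A a x) = Some w -> w <=: y) -> v <=: y.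
Proof.
  intros [Kadd [Kmul _]] HD Hs Hv Hle.
  pose proof (Kadd _ _ _ _ (directed_pmul_l a HD) (Kmul D s a HD Hs) Hv) as Hsup.
  apply (proj2 Hsup).
  intros w [x' [[x [Hx ->]] Hw]]. exact (Hle x w Hx Hw).
Qed.

Lemma fsum_pmul_l a l S :
  fsum A l = Some S -> fsum A (map (pmul A a) l) = Some (pmul A a S).
Proof.
  revert S; induction l as [|x l IH]; intros S H; simpl in *.
  - injection H as <-. rewrite pmul_0r. reflexivity.
  - destruct (fsum A l) as [S'|]; simpl in H; [|discriminate].
    rewrite (IH S' eq_refl). simpl. apply pmul_addr; assumption.
Qed.

Lemma fsum_app_cons p x q v :
  fsum A (p ++ x :: q) = Some v ->
  exists w, fsum A (p ++ q) = Some w /\ padd A x w = Some v.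
Proof.
  revert v; induction p as [|y p IH]; intros v H; simpl in *.
  - destruct (fsum A q); simpl in H; [eauto | discriminate].
  - destruct (fsum A (p ++ x :: q)) as [u|]; simpl in H; [|discriminate].
    destruct (IH u eq_refl) as [w [Hw Hxw]].
    destruct (padd_reassoc_l Hxw H) as [yx [Hyx Hv]].
    rewrite padd_comm in Hyx.
    destruct (padd_reassoc_r Hyx Hv) as [z [Hz Hxz]].
    exists z. rewrite Hw. simpl. auto.
Qed.

Variable Sig : Type.

Lemma fsum_map_padd (f g h : Sig -> U) :
  (forall t, padd A (g t) (h t) = Some (f t)) ->
  forall l G H S, fsum A (map g l) = Some G -> fsum A (map h l) = Some H ->
  padd A G H = Some S -> fsum A (map f l) = Some S.
Proof.
  intros Hf. induction l as [|x l IH]; intros G H S HG HH HS; simpl in *.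
  - injection HG as <-. injection HH as <-. rewrite padd_0 in HS. exact HS.
  - destruct (fsum A (map g l)) as [G'|]; simpl in HG; [|discriminate].
    destruct (fsum A (map h l)) as [H'|]; simpl in HH; [|discriminate].
    assert (LG : G' <=: G) by (exists (g x); rewrite padd_comm; assumption).
    assert (LH : H' <=: H) by (exists (h x); rewrite padd_comm; assumption).
    destruct (padd_ple LG LH HS) as [S' [HS' _]].
    rewrite (IH G' H' S' eq_refl eq_refl HS'). simpl.
    destruct (padd_interchange HG HH HS) as [j [k [Hj [Hk Hjk]]]].
    rewrite Hf in Hj. injection Hj as <-. rewrite HS' in Hk. injection Hk as <-.
    exact Hjk.
Qed.

Lemma fsum_incl (f : Sig -> U) l1 l2 v :
  NoDup l1 -> incl l1 l2 -> fsum A (map f l2) = Some v ->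
  exists u, fsum A (map f l1) = Some u /\ u <=: v.
Proof.
  revert l2 v; induction l1 as [|x l1 IH]; intros l2 v N1 I H.
  - exists (pzero A). split; [reflexivity | apply ple_0].
  - apply NoDup_cons_iff in N1 as [Hx N1].
    destruct (in_split x l2 (I x (or_introl eq_refl))) as [p [q ->]].
    rewrite map_app in H. simpl in H.
    destruct (fsum_app_cons H) as [w [Hw Hxw]].
    rewrite <- map_app in Hw.
    assert (I' : incl l1 (p ++ q)).
    { intros y Hy. assert (Hy' : In y (p ++ x :: q)) by (apply I; right; exact Hy).
      apply in_app_iff in Hy' as [? | [<- | ?]]; apply in_app_iff; tauto. }
    destruct (IH _ _ N1 I' Hw) as [u' [Hu' Lu']].
    destruct (padd_ple (ple_refl (f x)) Lu' Hxw) as [z [Hz Lz]].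
    exists z. simpl. rewrite Hu'. simpl. auto.
Qed.

Lemma fsum_supp (m : Sig -> U) l : NoDup l ->
  exists l', NoDup l' /\ incl l' l /\ (forall x, In x l' -> supp A m x) /\
             fsum A (map m l') = fsum A (map m l).
Proof.
  induction l as [|x l IH]; intros Hl.
  - exists []. repeat split; [constructor | intros _ [] | intros _ []].
  - apply NoDup_cons_iff in Hl as [Hx Hl].
    destruct (IH Hl) as [l' [N' [I' [S' F']]]].
    destruct (classic (supp A m x)) as [Hs | Hs].
    + exists (x :: l'). repeat split.
      * constructor; [intros Hin; exact (Hx (I' x Hin)) | exact N'].
      * apply incl_cons; [left; reflexivity | apply incl_tl; exact I'].
      * intros y [<- | Hy]; auto.
      * simpl. rewrite F'. reflexivity.
    + exists l'. repeat split; [exact N' | apply incl_tl; exact I' | exact S' |].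
      apply NNPP in Hs. simpl. rewrite Hs, F'.
      destruct (fsum A (map m l)); simpl; [rewrite padd_0 |]; reflexivity.
Qed.

Lemma fsum_partial_sums (m : Sig -> U) l v :
  NoDup l -> fsum A (map m l) = Some v -> partial_sums A m v.
Proof.
  intros Hl Hv. destruct (fsum_supp m Hl) as [l' [N' [_ [S' F']]]].
  exists l'. rewrite F'. auto.
Qed.

Lemma mass_defined_fsum (m : Sig -> U) l :
  mass_defined A m -> NoDup l -> exists v, fsum A (map m l) = Some v.
Proof.
  intros [Hdef _] Hl. destruct (fsum_supp m Hl) as [l' [N' [_ [S' F']]]].
  rewrite <- F'. exact (Hdef l' N' S').
Qed.

Lemma NoDup_incl_exists (l : list Sig) : exists l', NoDup l' /\ incl l l'.
Proof.
  induction l as [|x l [l' [N I]]].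
  - exists []. split; [constructor | intros _ []].
  - destruct (classic (In x l')) as [H | H].
    + exists l'. split; [exact N | intros y [<- | Hy]; auto].
    + exists (x :: l'). split; [constructor; assumption |].
      intros y [<- | Hy]; simpl; auto.
Qed.

Lemma partial_sums_directed (m : Sig -> U) :
  mass_defined A m -> directed A (partial_sums A m).
Proof.
  intros Hm. split.
  - exists (pzero A), []. repeat split; [constructor | intros _ []].
  - intros x y [l [Nl [_ Fl]]] [l' [Nl' [_ Fl']]].
    destruct (NoDup_incl_exists (l ++ l')) as [l0 [N0 [I1 I2]%incl_app_inv]].
    destruct (mass_defined_fsum Hm N0) as [S HS].
    exists S. split; [exact (fsum_partial_sums N0 HS) |].
    destruct (fsum_incl Nl I1 HS) as [u [Hu Lu]].
    destruct (fsum_incl Nl' I2 HS) as [u' [Hu' Lu']].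
    rewrite Fl in Hu. rewrite Fl' in Hu'. injection Hu as <-. injection Hu' as <-.
    auto.
Qed.

Lemma countable_supp_union (m m1 m2 : Sig -> U) :
  (forall t, supp A m t -> supp A m1 t \/ supp A m2 t) ->
  countable_supp A m1 -> countable_supp A m2 -> countable_supp A m.
Proof.
  intros Hsub [g1 G1] [g2 G2].
  exists (fun t => if excluded_middle_informative (supp A m1 t) then 2 * g1 t
                   else 2 * g2 t + 1).
  intros x y Hx Hy.
  destruct (excluded_middle_informative (supp A m1 x)) as [Hx1 | Hx1];
  destruct (excluded_middle_informative (supp A m1 y)) as [Hy1 | Hy1]; intros E.
  - apply G1; auto. lia.
  - lia.
  - lia.
  - apply G2; [destruct (Hsub x Hx) | destruct (Hsub y Hy) | lia]; tauto.
Qed.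

Section Combination.
Variables (a b c : U) (m1 m2 : Sig -> U).
Hypotheses (Htop : has_top A) (Habc : padd A a b = Some c).

Lemma combination_exists :
  exists m : Sig -> U,
    forall t, padd A (pmul A a (m1 t)) (pmul A b (m2 t)) = Some (m t).
Proof.
  exists (fun t => match padd A (pmul A a (m1 t)) (pmul A b (m2 t)) with
                   | Some v => v | None => pzero A end).
  intros t. destruct (padd_pmul_defined (m1 t) (m2 t) Htop Habc) as [z Hz].
  rewrite Hz. reflexivity.
Qed.

Variable m : Sig -> U.
Hypothesis Hm : forall t, padd A (pmul A a (m1 t)) (pmul A b (m2 t)) = Some (m t).

Lemma supp_combination t : supp A m t -> supp A m1 t \/ supp A m2 t.
Proof.
  intros Ht. apply NNPP. intros Hn. apply Ht.
  assert (H1 : m1 t = pzero A) by (apply NNPP; tauto).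
  assert (H2 : m2 t = pzero A) by (apply NNPP; tauto).
  pose proof (Hm t) as E. rewrite H1, H2, !pmul_0r, padd_0 in E.
  injection E as E. auto.
Qed.

Lemma fsum_combination l T1 T2 :
  fsum A (map m1 l) = Some T1 -> fsum A (map m2 l) = Some T2 ->
  exists W, padd A (pmul A a T1) (pmul A b T2) = Some W /\ fsum A (map m l) = Some W.
Proof.
  intros F1 F2. destruct (padd_pmul_defined T1 T2 Htop Habc) as [W HW].
  exists W. split; [exact HW |].
  apply fsum_pmul_l with (a := a) in F1. apply fsum_pmul_l with (a := b) in F2.
  rewrite map_map in F1, F2. exact (fsum_map_padd Hm F1 F2 HW).
Qed.

Variables (M1 M2 M : U).
Hypotheses (Hm1 : mass_defined A m1) (Hm2 : mass_defined A m2).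
Hypotheses (HM1 : is_sup A (partial_sums A m1) M1)
           (HM2 : is_sup A (partial_sums A m2) M2).
Hypothesis HM : padd A (pmul A a M1) (pmul A b M2) = Some M.

Lemma partial_sums_combination_le v : partial_sums A m v -> v <=: M.
Proof.
  intros [l [Hl [_ Hv]]].
  destruct (mass_defined_fsum Hm1 Hl) as [T1 F1].
  destruct (mass_defined_fsum Hm2 Hl) as [T2 F2].
  destruct (fsum_combination F1 F2) as [W [HW FW]].
  rewrite Hv in FW. injection FW as <-.
  pose proof (proj1 HM1 T1 (fsum_partial_sums Hl F1)) as L1.
  pose proof (proj1 HM2 T2 (fsum_partial_sums Hl F2)) as L2.
  destruct (padd_ple (ple_pmul_l a L1) (ple_pmul_l b L2) HM) as [z [Hz Lz]].
  rewrite HW in Hz. injection Hz as <-. exact Lz.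
Qed.

Variable y : U.
Hypothesis Hy : forall v, partial_sums A m v -> v <=: y.

Lemma combination_partial_sums_le x1 x2 w :
  partial_sums A m1 x1 -> partial_sums A m2 x2 ->
  padd A (pmul A a x1) (pmul A b x2) = Some w -> w <=: y.
Proof.
  intros [l1 [N1 [_ F1]]] [l2 [N2 [_ F2]]] Hw.
  destruct (NoDup_incl_exists (l1 ++ l2)) as [l0 [N0 [I1 I2]%incl_app_inv]].
  destruct (mass_defined_fsum Hm1 N0) as [T1 FT1].
  destruct (mass_defined_fsum Hm2 N0) as [T2 FT2].
  destruct (fsum_combination FT1 FT2) as [W [HW FW]].
  destruct (fsum_incl N1 I1 FT1) as [u1 [Hu1 L1]].
  destruct (fsum_incl N2 I2 FT2) as [u2 [Hu2 L2]].
  rewrite F1 in Hu1. rewrite F2 in Hu2. injection Hu1 as <-. injection Hu2 as <-.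
  destruct (padd_ple (ple_pmul_l a L1) (ple_pmul_l b L2) HW) as [z [Hz Lz]].
  rewrite Hw in Hz. injection Hz as <-.
  exact (ple_trans Lz (Hy (fsum_partial_sums N0 FW))).
Qed.

Hypothesis Hcont : scott_continuous A.

Lemma combination_le_ub : M <=: y.
Proof.
  assert (Hinner : forall x1 w, partial_sums A m1 x1 ->
            padd A (pmul A a x1) (pmul A b M2) = Some w -> w <=: y).
  { intros x1 w P1 Hw.
    apply (padd_pmul_sup_le Hcont (partial_sums_directed Hm2) HM2 Hw).
    intros x2 w' P2 Hw'. exact (combination_partial_sums_le P1 P2 Hw'). }
  rewrite padd_comm in HM.
  apply (padd_pmul_sup_le Hcont (partial_sums_directed Hm1) HM1 HM).
  intros x1 w P1 Hw. rewrite padd_comm in Hw. exact (Hinner x1 w P1 Hw).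
Qed.

End Combination.

Lemma mass_defined_combination a b c (m1 m2 m : Sig -> U) :
  has_top A -> scott_continuous A -> padd A a b = Some c ->
  (forall t, padd A (pmul A a (m1 t)) (pmul A b (m2 t)) = Some (m t)) ->
  mass_defined A m1 -> mass_defined A m2 -> mass_defined A m.
Proof.
  intros Htop Hcont Habc Hm Hm1 Hm2. split.
  - intros l Hl _.
    destruct (mass_defined_fsum Hm1 Hl) as [T1 F1].
    destruct (mass_defined_fsum Hm2 Hl) as [T2 F2].
    destruct (fsum_combination Htop Habc Hm F1 F2) as [W [_ FW]]. eauto.
  - destruct (proj2 Hm1) as [M1 HM1]. destruct (proj2 Hm2) as [M2 HM2].
    destruct (padd_pmul_defined M1 M2 Htop Habc) as [M HM].
    exists M. split.
    + exact (partial_sums_combination_le Htop Habc Hm Hm1 Hm2 HM1 HM2 HM).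
    + intros y Hy. exact (combination_le_ub Htop Habc Hm Hm1 Hm2 HM1 HM2 HM Hy Hcont).
Qed.

End PartialSemiring.

Theorem lemmaA7 (U : Type) (A : psemiring U)
  (HA_ord : naturally_ordered A) (HA_cont : scott_continuous A) (HA_top : has_top A)
  (Sig : Type) (e1 e2 : expr U Sig) :
  compatible A e1 e2 ->
  forall (s : Sig) (m1 m2 : Sig -> U), inW A m1 -> inW A m2 ->
    exists m : Sig -> U,
      (forall t : Sig,
          padd A (pmul A (expr_eval A e1 s) (m1 t)) (pmul A (expr_eval A e2 s) (m2 t))
          = Some (m t)) /\
      inW A m.
Proof.
  intros Hcomp s m1 m2 [C1 D1] [C2 D2].
  destruct (Hcomp s) as [c Hc].
  destruct (combination_exists m1 m2 HA_top Hc) as [m Hm].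
  exists m. split; [exact Hm | split].
  - exact (countable_supp_union (supp_combination Hm) C1 C2).
  - exact (mass_defined_combination HA_top HA_cont Hc Hm D1 D2).
Qed.
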